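(* Let $H$ be an affine algebraic group acting regularly on an irreducible affine variety $X$ over an algebraically closed field $\Bbbk$, and suppose that ${}^H\Bbbk[X]$ is a finitely generated $\Bbbk$--algebra. Let $\pi:X\to X/_{\mathrm{aff}}H$ be the affinized quotient. If every fiber of $\pi$ is a single (closed) $H$--orbit, then the action of $H$ on $X$ is observable.
   Context: $H$ acts on $\Bbbk[X]$ by $(x\cdot f)(p)=f(x^{-1}p)$ (any convention for the induced action gives the same invariants); ${}^H\Bbbk[X]$ is the algebra of $H$--invariant regular functions. When it is finitely generated, $X/_{\mathrm{aff}}H$ is the affine variety with coordinate ring ${}^H\Bbbk[X]$ and $\pi$ is the morphism corresponding to the inclusion ${}^H\Bbbk[X]\subseteq\Bbbk[X]$. The action of $H$ on $X$ is observable if for every $H$--stable closed subset $Y\subsetneq X$ there exists a nonzero $f\in{}^H\Bbbk[X]$ vanishing on $Y$. *)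

(* Affine varieties are modelled concretely as Zariski-closed
   subsets of k^n = 'rV[k]_n; regular functions are restrictions of polynomial
   functions (the subring of k^n -> k generated by constants and coordinates). *)
From HB Require Import structures.
From mathcomp Require Import all_boot all_order all_algebra.
Set Implicit Arguments. Unset Strict Implicit. Unset Printing Implicit Defensive.
Import GRing.Theory.
Local Open Scope ring_scope.

Section AffineDefs.
Variable k : fieldType.

Inductive polyfun (n : nat) : ('rV[k]_n -> k) -> Prop :=
| PFconst (c : k) : polyfun (fun _ => c)
| PFcoord (i : 'I_n) : polyfun (fun x => x ord0 i)
| PFadd f g : polyfun f -> polyfun g -> polyfun (fun x => f x + g x)
| PFmul f g : polyfun f -> polyfun g -> polyfun (fun x => f x * g x)
| PFext f g : polyfun f -> (forall x, f x = g x) -> polyfun g.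

Definition zclosed n (Z : 'rV[k]_n -> Prop) : Prop :=
  exists S : ('rV[k]_n -> k) -> Prop,
    (forall f, S f -> polyfun f) /\ (forall x, Z x <-> forall f, S f -> f x = 0).

Definition irreducible_variety n (X : 'rV[k]_n -> Prop) : Prop :=
  [/\ zclosed X, exists x, X x &
      forall Z1 Z2 : 'rV[k]_n -> Prop, zclosed Z1 -> zclosed Z2 ->
        (forall x, X x -> Z1 x \/ Z2 x) ->
        (forall x, X x -> Z1 x) \/ (forall x, X x -> Z2 x)].

Definition regular_on n (X : 'rV[k]_n -> Prop) (f : 'rV[k]_n -> k) : Prop :=
  exists p, polyfun p /\ forall x, X x -> f x = p x.

Definition morphism_on n m (X : 'rV[k]_n -> Prop) (F : 'rV[k]_n -> 'rV[k]_m) : Prop :=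
  forall j : 'I_m, regular_on X (fun x => F x ord0 j).

Definition prod_set m n (A : 'rV[k]_m -> Prop) (B : 'rV[k]_n -> Prop)
  : 'rV[k]_(m + n) -> Prop := fun z => A (lsubmx z) /\ B (rsubmx z).

Definition affine_algebraic_group m (G : 'rV[k]_m -> Prop) (e : 'rV[k]_m)
  (mul : 'rV[k]_m -> 'rV[k]_m -> 'rV[k]_m) (inv : 'rV[k]_m -> 'rV[k]_m) : Prop :=
  [/\ zclosed G, G e,
      (forall g h, G g -> G h -> G (mul g h)) /\ (forall g, G g -> G (inv g)),
      (forall g h l, G g -> G h -> G l -> mul g (mul h l) = mul (mul g h) l)
      /\ (forall g, G g -> mul e g = g /\ mul g e = g)
      /\ (forall g, G g -> mul (inv g) g = e /\ mul g (inv g) = e)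
    & morphism_on (prod_set G G) (fun z => mul (lsubmx z) (rsubmx z))
      /\ morphism_on G inv].

Definition regular_action m n (G : 'rV[k]_m -> Prop) (e : 'rV[k]_m)
  (mul : 'rV[k]_m -> 'rV[k]_m -> 'rV[k]_m) (X : 'rV[k]_n -> Prop)
  (act : 'rV[k]_m -> 'rV[k]_n -> 'rV[k]_n) : Prop :=
  [/\ forall g x, G g -> X x -> X (act g x),
      forall x, X x -> act e x = x,
      forall g h x, G g -> G h -> X x -> act (mul g h) x = act g (act h x)
    & morphism_on (prod_set G X) (fun z => act (lsubmx z) (rsubmx z))].

Definition invariant_fun m n (G : 'rV[k]_m -> Prop) (X : 'rV[k]_n -> Prop)
  (act : 'rV[k]_m -> 'rV[k]_n -> 'rV[k]_n) (f : 'rV[k]_n -> k) : Prop :=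
  regular_on X f /\ forall g x, G g -> X x -> f (act g x) = f x.

Definition quot_map n r (f : 'I_r -> 'rV[k]_n -> k) (x : 'rV[k]_n) : 'rV[k]_r :=
  \row_i f i x.

Definition generates_invariants m n (G : 'rV[k]_m -> Prop) (X : 'rV[k]_n -> Prop)
  (act : 'rV[k]_m -> 'rV[k]_n -> 'rV[k]_n) r (f : 'I_r -> 'rV[k]_n -> k) : Prop :=
  (forall i, invariant_fun G X act (f i)) /\
  forall g, invariant_fun G X act g ->
    exists P : 'rV[k]_r -> k, polyfun P /\ forall x, X x -> g x = P (quot_map f x).

(* X/_aff H realised in k^r via the generators: the Zariski closure of the
   image of quot_map f, whose coordinate ring is k[f_1,...,f_r] = ^H k[X];
   pi = quot_map f. *)
Definition aff_quotient n (X : 'rV[k]_n -> Prop) r (f : 'I_r -> 'rV[k]_n -> k)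
  : 'rV[k]_r -> Prop :=
  fun y => forall P, polyfun P -> (forall x, X x -> P (quot_map f x) = 0) -> P y = 0.

Definition h_orbit m n (G : 'rV[k]_m -> Prop) (act : 'rV[k]_m -> 'rV[k]_n -> 'rV[k]_n)
  (x0 x : 'rV[k]_n) : Prop := exists g, G g /\ x = act g x0.

Definition observable m n (G : 'rV[k]_m -> Prop) (X : 'rV[k]_n -> Prop)
  (act : 'rV[k]_m -> 'rV[k]_n -> 'rV[k]_n) : Prop :=
  forall Y : 'rV[k]_n -> Prop, zclosed Y -> (forall y, Y y -> X y) ->
    (forall g y, G g -> Y y -> Y (act g y)) -> (exists x, X x /\ ~ Y x) ->
    exists f, [/\ invariant_fun G X act f, (exists x, X x /\ f x <> 0)
              & forall y, Y y -> f y = 0].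

End AffineDefs.

(* Let Y be a proper closed H-stable subset of X and let p be a polynomial map
   agreeing with pi = (f_1, ..., f_r) on X.  Cutting Y out by finitely many
   equations (Hilbert's basis theorem) and eliminating quantifiers over the
   algebraically closed field k shows that p(Y) is constructible (Chevalley).
   In the irreducible set p(X) a constructible set either lies in a
   hypersurface P = 0 not containing p(X), and then P o pi is an invariant
   vanishing on Y but not on X; or it contains a nonempty basic open set
   q <> 0.  In the second case every x in X with q (p x) <> 0 shares its fibre
   with a point of Y; as fibres are orbits and Y is H-stable, x lies in Y, so
   X is the union of Y and the zero set of q o p, contradicting irreducibility. *)

From mathcomp Require Import all_boot all_algebra closed_field zify.
From Stdlib Require Import Classical IndefiniteDescription.
Set Implicit Arguments. Unset Strict Implicit. Unset Printing Implicit Defensive.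
Import GRing.Theory.
Local Open Scope ring_scope.

Inductive in_ideal (R : comNzRingType) (A : R -> Prop) : R -> Prop :=
| in_ideal0 : in_ideal A 0
| in_idealMgen c a : A a -> in_ideal A (c * a)
| in_idealD a b : in_ideal A a -> in_ideal A b -> in_ideal A (a + b).

Notation in_ideal_seq L := (in_ideal (fun x => x \in L)).

Section Ideals.
Variable R : comNzRingType.
Implicit Types (A B : R -> Prop) (a b c : R).

Lemma in_idealMl A c a : in_ideal A a -> in_ideal A (c * a).
Proof.
elim=> [|c' a' Aa'|a1 a2 _ IH1 _ IH2]; first by rewrite mulr0; exact: in_ideal0.
  by rewrite mulrA; exact: in_idealMgen.
by rewrite mulrDr; exact: in_idealD.
Qed.

Lemma in_idealB A a b : in_ideal A a -> in_ideal A b -> in_ideal A (a - b).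
Proof. by move=> Ia Ib; apply: in_idealD => //; rewrite -mulN1r; exact: in_idealMl. Qed.

Lemma in_ideal_gen A a : A a -> in_ideal A a.
Proof. by move=> Aa; rewrite -[a]mul1r; exact: in_idealMgen. Qed.

Lemma in_ideal_trans A B a :
  (forall b, A b -> in_ideal B b) -> in_ideal A a -> in_ideal B a.
Proof.
move=> AB; elim=> [|c a' Aa'|a1 a2 _ IH1 _ IH2]; first exact: in_ideal0.
  exact/in_idealMl/AB.
exact: in_idealD.
Qed.

Lemma in_ideal_sub A B a : (forall b, A b -> B b) -> in_ideal A a -> in_ideal B a.
Proof. by move=> AB; apply: in_ideal_trans => b /AB; exact: in_ideal_gen. Qed.

Lemma in_ideal_finite A a : in_ideal A a ->
  exists2 L : seq R, (forall l, l \in L -> A l) & in_ideal_seq L a.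
Proof.
elim=> [|c a' Aa'|a1 a2 _ [L1 A1 I1] _ [L2 A2 I2]].
- by exists [::] => //; exact: in_ideal0.
- exists [:: a'] => [l|]; first by rewrite inE => /eqP->.
  by apply: in_idealMgen; rewrite inE.
- exists (L1 ++ L2) => [l|]; first by rewrite mem_cat => /orP[/A1|/A2].
  by apply: in_idealD; [apply: in_ideal_sub I1|apply: in_ideal_sub I2] => b Lb;
     rewrite mem_cat Lb ?orbT.
Qed.

Lemma in_ideal_chain (B : nat -> R -> Prop) a :
  (forall N M b, (N <= M)%N -> B N b -> B M b) ->
  in_ideal (fun b => exists N, B N b) a -> exists N, in_ideal (B N) a.
Proof.
move=> Bmono; elim=> [|c a' [N BN]|a1 a2 _ [N1 I1] _ [N2 I2]].
- by exists 0%N; exact: in_ideal0.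
- by exists N; exact: in_idealMgen.
- exists (maxn N1 N2); apply: in_idealD.
    by apply: in_ideal_sub I1 => b; apply: Bmono; exact: leq_maxl.
  by apply: in_ideal_sub I2 => b; apply: Bmono; exact: leq_maxr.
Qed.

Lemma rmorph_ideal_eq0 (S : pzRingType) (phi : {rmorphism R -> S}) A a :
  (forall b, A b -> phi b = 0) -> in_ideal A a -> phi a = 0.
Proof.
move=> A0; elim=> [|c b Ab|a1 a2 _ E1 _ E2]; first exact: rmorph0.
  by rewrite rmorphM (A0 _ Ab) mulr0.
by rewrite rmorphD E1 E2 addr0.
Qed.

Definition noetherian := forall A : R -> Prop, exists L : seq R,
  (forall l, l \in L -> in_ideal A l) /\ forall a, A a -> in_ideal_seq L a.

Lemma noetherian_gen_sub : noetherian -> forall A : R -> Prop, exists L : seq R,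
  (forall l, l \in L -> A l) /\ forall a, A a -> in_ideal_seq L a.
Proof.
move=> noethR A; have [L0 [L0A AL0]] := noethR A.
pose Rel l (L : seq R) :=
  in_ideal A l -> (forall b, b \in L -> A b) /\ in_ideal_seq L l.
have [Lf HLf] : exists Lf, forall l, Rel l (Lf l).
  apply: functional_choice => l; case: (classic (in_ideal A l)).
    by move=> /in_ideal_finite [L LA IL]; exists L.
  by exists [::].
exists (flatten [seq Lf l | l <- L0]); split.
  by move=> b /flatten_mapP [l /L0A /HLf [LA _]]; exact: LA.
move=> a /AL0; apply: in_ideal_trans => l Ll.
have [_ Il] := HLf l (L0A l Ll).
by apply: in_ideal_sub Il => b Lb; apply/flatten_mapP; exists l.
Qed.

End Ideals.

Lemma noetherian_field (F : fieldType) : noetherian F.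
Proof.
move=> A; case: (classic (exists2 a, A a & a != 0)) => [[a Aa a0]|NA].
  exists [:: a]; split => [l|b _]; first by rewrite inE => /eqP->; exact: in_ideal_gen.
  by rewrite -[b](divfK a0); apply: in_idealMgen; exact: mem_head.
exists [::]; split => // b Ab; suff -> : b = 0 by exact: in_ideal0.
by apply: NNPP => b0; apply: NA; exists b => //; exact/eqP.
Qed.

Lemma ex_argmin (T : Type) (m : T -> nat) (P : T -> Prop) :
  (exists a, P a) -> exists a, P a /\ forall b, P b -> (m a <= m b)%N.
Proof.
move=> [a Pa]; apply: NNPP => nomin.
suff noP n b : (m b <= n)%N -> ~ P b by exact: noP (leqnn _) Pa.
elim: n b => [|n IH] b mb Pb; apply: nomin; exists b; split => // c Pc;
  apply: NNPP => mc; first lia.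
by apply: (IH c) => //; lia.
Qed.

Lemma seq_bound (T : eqType) (P : nat -> T -> Prop) (s : seq T) :
  (forall N M x, (N <= M)%N -> P N x -> P M x) ->
  (forall x, x \in s -> exists N, P N x) -> exists N, forall x, x \in s -> P N x.
Proof.
move=> Pmono; elim: s => [|x s IH] Ps; first by exists 0%N.
have [N1 P1] := Ps x (mem_head _ _).
have [N2 P2] : exists N, forall y, y \in s -> P N y.
  by apply: IH => y sy; apply: Ps; rewrite inE sy orbT.
exists (maxn N1 N2) => y; rewrite inE => /orP[/eqP->|/P2].
  exact: Pmono (leq_maxl _ _) P1.
exact: Pmono (leq_maxr _ _).
Qed.

Section HilbertBasis.
Variables (R : comNzRingType) (A : {poly R} -> Prop).
Hypothesis noethR : noetherian R.

Definition least_outside (L : seq {poly R}) (a : {poly R}) :=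
  [/\ in_ideal A a, ~ in_ideal_seq L a &
      forall b, in_ideal A b -> ~ in_ideal_seq L b -> (size a <= size b)%N].

Lemma least_outside_exists L :
  (exists2 a, in_ideal A a & ~ in_ideal_seq L a) -> exists a, least_outside L a.
Proof.
move=> [a Aa La].
have [b [[Ab Lb] bmin]] := @ex_argmin _ (fun p : {poly R} => size p)
  (fun b => in_ideal A b /\ ~ in_ideal_seq L b) (ex_intro _ a (conj Aa La)).
by exists b; split => // c Ac Lc; apply: bmin.
Qed.

(* If the ideal of [A] is not finitely generated, let [gen j] have least degree
   in it but outside the ideal of [gen 0, ..., gen j.-1].  By noetherianity of
   [R], [lead_coef (gen N)] is a combination of earlier leading coefficients;
   subtracting the matching combination of shifted [gen i] lowers the degree
   of [gen N] without leaving the ideal: a contradiction. *)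
Variable next : seq {poly R} -> {poly R}.
Hypothesis nextP : forall L,
  (forall l, l \in L -> in_ideal A l) -> least_outside L (next L).

Fixpoint chain j := if j is j'.+1 then rcons (chain j') (next (chain j')) else [::].
Definition gen j := next (chain j).

Lemma mem_chain j p : p \in chain j <-> exists2 i, (i < j)%N & p = gen i.
Proof.
elim: j p => [|j IH] p /=; first by split => // [[]].
rewrite mem_rcons inE; split.
  case/orP => [/eqP->|/IH [i ij ->]]; first by exists j.
  by exists i => //; lia.
move=> [i ij ->]; apply/orP; case: (ltngtP i j) => [ltij|gtij|->].
- by right; apply/IH; exists i.
- lia.
- by left.
Qed.

Lemma gen_least j : least_outside (chain j) (gen j).
Proof.
apply: nextP; elim: j => [|j IH] //= l; rewrite mem_rcons inE.
by case/orP => [/eqP->|/IH //]; have [] := nextP IH.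
Qed.

Lemma size_gen_mono i j : (i <= j)%N -> (size (gen i) <= size (gen j))%N.
Proof.
move=> ij; have [_ _ imin] := gen_least i; have [Aj outj _] := gen_least j.
apply: imin => // Ii; apply: outj; apply: in_ideal_sub Ii => p /mem_chain [i' i'i ->].
by apply/mem_chain; exists i' => //; lia.
Qed.

Lemma size_gen_gt0 j : (0 < size (gen j))%N.
Proof.
rewrite size_poly_gt0; apply/eqP => gj0; have [_ outj _] := gen_least j.
by apply: outj; rewrite gj0; exact: in_ideal0.
Qed.

Definition lead_coef_gen_below N (a : R) := exists2 i, (i < N)%N & a = lead_coef (gen i).

Lemma lead_coef_gen_stable :
  exists N, in_ideal (lead_coef_gen_below N) (lead_coef (gen N)).
Proof.
have below_mono N M a : (N <= M)%N -> lead_coef_gen_below N a -> lead_coef_gen_below M a.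
  by move=> NM [i iN ->]; exists i => //; lia.
have [L [LJ JL]] := noethR (fun a => exists j, a = lead_coef (gen j)).
have [N LN] : exists N, forall l, l \in L -> in_ideal (lead_coef_gen_below N) l.
  apply: seq_bound => [N M l NM|l /LJ IJ].
    by apply: in_ideal_sub => a; exact: below_mono.
  apply: (in_ideal_chain (B := lead_coef_gen_below)) => [N M a|]; first exact: below_mono.
  by apply: in_ideal_sub IJ => _ [j ->]; exists j.+1, j.
by exists N; apply: in_ideal_trans LN _; apply: JL; exists N.
Qed.

(* Witness: the same combination of the [X^(d.+1 - size (gen i)) * gen i]. *)
Lemma lift_lead_coef N d :
  (forall i, (i < N)%N -> (size (gen i) <= d.+1)%N) ->
  forall a, in_ideal (lead_coef_gen_below N) a ->
  exists h, [/\ in_ideal_seq (chain N) h, (size h <= d.+1)%N & h`_d = a].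
Proof.
move=> sizeN a; elim=> [|c _ [i iN ->]|a1 a2 _ [h1 [I1 s1 c1]] _ [h2 [I2 s2 c2]]].
- by exists 0; split; [exact: in_ideal0|rewrite size_poly0|rewrite coef0].
- have s_gt0 := size_gen_gt0 i; have s_le := sizeN i iN.
  exists (c%:P * ('X^(d.+1 - size (gen i)) * gen i)); split.
  + by apply/in_idealMl/in_idealMl/in_ideal_gen/mem_chain; exists i.
  + rewrite mul_polyC; apply: leq_trans (size_scale_leq _ _) _.
    by apply: leq_trans (size_polyMleq _ _) _; rewrite size_polyXn; lia.
  + rewrite coefCM coefXnM ifF; last by apply/negbTE; rewrite -leqNgt; lia.
    by rewrite lead_coefE; congr (_ * _`_ _); lia.
- exists (h1 + h2); split; first exact: in_idealD.
    by apply: leq_trans (size_polyD _ _) _; rewrite geq_max s1 s2.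
  by rewrite coefD c1 c2.
Qed.

Lemma hilbert_basis_contra : False.
Proof.
have [N IN] := lead_coef_gen_stable.
set d := (size (gen N)).-1.
have sN : size (gen N) = d.+1 by rewrite prednK //; exact: size_gen_gt0.
have [h [Ih sh ch]] : exists h, [/\ in_ideal_seq (chain N) h,
    (size h <= d.+1)%N & h`_d = lead_coef (gen N)].
  apply: lift_lead_coef IN => i iN; rewrite -sN; apply: size_gen_mono; lia.
have [AN outN Nmin] := gen_least N.
have Ar : in_ideal A (gen N - h).
  apply: in_idealB => //; apply: in_ideal_trans Ih => p /mem_chain [i _ ->].
  by have [] := gen_least i.
have outr : ~ in_ideal_seq (chain N) (gen N - h).
  by move=> Ir; apply: outN; rewrite -(subrK h (gen N)); exact: in_idealD.
have : (size (gen N - h)%R <= d)%N.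
  apply/leq_sizeP => j dj; rewrite coefB; case: (ltngtP j d) => [|jd|->]; first lia.
    rewrite !nth_default ?subrr //; first exact: leq_trans sh jd.
    by rewrite sN.
  by rewrite -lead_coefE -ch subrr.
by have := Nmin _ Ar outr; lia.
Qed.

End HilbertBasis.

Theorem noetherian_poly (R : comNzRingType) : noetherian R -> noetherian {poly R}.
Proof.
move=> noethR A; apply: NNPP => not_noeth.
have not_fg (L : seq {poly R}) : (forall l, l \in L -> in_ideal A l) ->
    exists2 a, in_ideal A a & ~ in_ideal_seq L a.
  move=> LA; apply: NNPP => fg; apply: not_noeth; exists L; split => // a Aa.
  by apply: NNPP => La; apply: fg; exists a => //; exact: in_ideal_gen.
pose Rel (L : seq {poly R}) a :=
  (forall l, l \in L -> in_ideal A l) -> least_outside A L a.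
have [next nextP] : exists next, forall L, Rel L (next L).
  apply: functional_choice => L; case: (classic (forall l, l \in L -> in_ideal A l)).
    by move=> /not_fg /least_outside_exists [a La]; exists a.
  by exists 0.
by apply: (@hilbert_basis_contra R A noethR next) => L; apply: nextP.
Qed.

Section PolynomialFunctions.
Variable k : fieldType.

Fixpoint mpoly_iter (n : nat) : comNzRingType :=
  if n is n'.+1 then ({poly mpoly_iter n'} : comNzRingType) else (k : comNzRingType).

(* [eval_iter n xs] substitutes [xs`_0] for the outermost variable. *)
Fixpoint eval_iter n (xs : seq k) : {rmorphism mpoly_iter n -> k} :=
  match n return {rmorphism mpoly_iter n -> k} with
  | 0 => idfun
  | n'.+1 => (horner_eval (head 0 xs) \o map_poly (eval_iter n' (behead xs)))%FUN
  end.

Fixpoint const_iter n (c : k) : mpoly_iter n :=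
  match n return mpoly_iter n with 0 => c | n'.+1 => (const_iter n' c)%:P end.

Fixpoint var_iter n (i : nat) : mpoly_iter n :=
  match n return mpoly_iter n with
  | 0 => 0
  | n'.+1 => if i is i'.+1 then (var_iter n' i')%:P else 'X
  end.

Lemma eval_const_iter n xs c : eval_iter n xs (const_iter n c) = c.
Proof.
elim: n xs => [|n IH] xs //=.
by rewrite horner_evalE map_polyC hornerC; apply: IH.
Qed.

Lemma eval_var_iter n xs i : (i < n)%N -> eval_iter n xs (var_iter n i) = nth 0 xs i.
Proof.
elim: n xs i => [|n IH] xs [|i] //= ltin.
  by rewrite horner_evalE map_polyX hornerX; case: xs.
by rewrite horner_evalE map_polyC hornerC; case: xs => [|x xs] /=; rewrite IH // nth_nil.
Qed.

Lemma noetherian_mpoly_iter n : noetherian (mpoly_iter n).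
Proof.
elim: n => [|n IH] /=; first exact: noetherian_field.
exact: noetherian_poly.
Qed.

Definition row2seq n (x : 'rV[k]_n) : seq k := [seq x ord0 i | i <- enum 'I_n].

Lemma size_row2seq n (x : 'rV[k]_n) : size (row2seq x) = n.
Proof. by rewrite size_map size_enum_ord. Qed.

Lemma nth_row2seq n (x : 'rV[k]_n) (i : 'I_n) : nth 0 (row2seq x) i = x ord0 i.
Proof. by rewrite (nth_map i) ?nth_ord_enum // size_enum_ord. Qed.

Lemma polyfun_mpoly_iter n (p : 'rV[k]_n -> k) : polyfun p ->
  exists P : mpoly_iter n, forall x, p x = eval_iter n (row2seq x) P.
Proof.
elim=> [c|i|f g _ [P EP] _ [Q EQ]|f g _ [P EP] _ [Q EQ]|f g _ [P EP] fg].
- by exists (const_iter n c) => x; rewrite eval_const_iter.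
- by exists (var_iter n i) => x; rewrite eval_var_iter // nth_row2seq.
- by exists (P + Q) => x; rewrite rmorphD EP EQ.
- by exists (P * Q) => x; rewrite rmorphM EP EQ.
- by exists P => x; rewrite -fg EP.
Qed.

Lemma zclosed_finite n (Y : 'rV[k]_n -> Prop) : zclosed Y ->
  exists s (F : 'I_s -> 'rV[k]_n -> k),
    (forall i, polyfun (F i)) /\ forall x, Y x <-> forall i, F i x = 0.
Proof.
move=> [S [Spoly SY]].
pose A (P : mpoly_iter n) := exists2 p, S p & forall x, p x = eval_iter n (row2seq x) P.
have [L [LA AL]] := noetherian_gen_sub (@noetherian_mpoly_iter n) A.
pose Rel (i : 'I_(size L)) (p : 'rV[k]_n -> k) :=
  S p /\ forall x, p x = eval_iter n (row2seq x) L`_i.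
have [F FL] : exists F, forall i, Rel i (F i).
  apply: functional_choice => i.
  by have [p Sp Ep] := LA _ (mem_nth 0 (ltn_ord i)); exists p.
exists (size L), F; split => [i|x]; first by have [/Spoly] := FL i.
rewrite SY; split => [Y0 i|F0 p Sp]; first by have [/Y0] := FL i.
have [P EP] := polyfun_mpoly_iter (Spoly p Sp).
rewrite EP; apply: rmorph_ideal_eq0 (AL P _) => [l Ll|]; last by exists p.
have li : (index l L < size L)%N by rewrite index_mem.
by rewrite -(nth_index 0 Ll); have [_ <-] := FL (Ordinal li); exact: F0.
Qed.

End PolynomialFunctions.

Section Formulas.
Variable k : fieldType.
Local Notation term := (GRing.term k).
Local Notation formula := (GRing.formula k).

(* The offset [r] leaves room in the environment for the coordinates of the
   image point, which come first. *)
Definition term_rep n r (p : 'rV[k]_n -> k) (t : term) :=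
  GRing.rterm t /\ forall (env : seq k) (x : 'rV[k]_n),
    (forall j : 'I_n, nth 0 env (r + j) = x ord0 j) -> GRing.eval env t = p x.

Lemma term_rep_eval n r p t env (x : 'rV[k]_n) : term_rep r p t ->
  (forall j : 'I_n, nth 0 env (r + j) = x ord0 j) -> GRing.eval env t = p x.
Proof. by move=> [_ Et]; exact: Et. Qed.

Lemma polyfun_term_rep n r (p : 'rV[k]_n -> k) : polyfun p -> exists t, term_rep r p t.
Proof.
elim=> [c|i|f g _ [t1 [r1 E1]] _ [t2 [r2 E2]]|f g _ [t1 [r1 E1]] _ [t2 [r2 E2]]|
        f g _ [t [rt Et]] fg].
- by exists (GRing.Const c); split.
- by exists ('X_(r + i))%T; split => // env x Ex /=; rewrite Ex.
- exists (t1 + t2)%T; split => [|env x Ex] /=; first by rewrite r1 r2.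
  by rewrite (E1 _ _ Ex) (E2 _ _ Ex).
- exists (t1 * t2)%T; split => [|env x Ex] /=; first by rewrite r1 r2.
  by rewrite (E1 _ _ Ex) (E2 _ _ Ex).
- by exists t; split => // env x Ex; rewrite -fg (Et _ _ Ex).
Qed.

Lemma polyfun_family_term_rep n r s (F : 'I_s -> 'rV[k]_n -> k) :
  (forall i, polyfun (F i)) -> exists t : 'I_s -> term, forall i, term_rep r (F i) (t i).
Proof.
by move=> Fpoly; apply: (functional_choice (fun i => term_rep r (F i))) => i;
  exact: polyfun_term_rep.
Qed.

Lemma polyfun_eval_term r (t : term) : GRing.rterm t ->
  polyfun (fun y : 'rV[k]_r => GRing.eval (row2seq y) t).
Proof.
elim: t => //=.
- move=> j _; case: (ltnP j r) => [jr|rj].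
    apply: (PFext (PFcoord k (Ordinal jr))) => y.
    by rewrite -(nth_row2seq y (Ordinal jr)).
  by apply: (PFext (PFconst _ 0)) => y; rewrite nth_default // size_row2seq.
- by move=> c _; exact: PFconst.
- by move=> m _; exact: PFconst.
- by move=> t1 IH1 t2 IH2 /andP[/IH1 P1 /IH2 P2]; exact: PFadd.
- move=> t1 IH1 /IH1 P1; apply: (PFext (PFmul (PFconst _ (-1)) P1)) => y.
  by rewrite mulN1r.
- move=> t1 IH1 m /IH1 P1; apply: (PFext (PFmul P1 (PFconst _ m%:R))) => y.
  by rewrite mulr_natr.
- by move=> t1 IH1 t2 IH2 /andP[/IH1 P1 /IH2 P2]; exact: PFmul.
- move=> t1 IH1 m /IH1 P1; elim: m => [|m IHm].
    by apply: (PFext (PFconst _ 1)) => y; rewrite expr0.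
  by apply: (PFext (PFmul P1 IHm)) => y; rewrite exprS.
Qed.

Lemma polyfun_prod_eval_term r (ts : seq term) : all (@GRing.rterm k) ts ->
  polyfun (fun y : 'rV[k]_r => \prod_(t <- ts) GRing.eval (row2seq y) t).
Proof.
elim: ts => [_|t ts IH /andP[rt /IH Pts]].
  by apply: (PFext (PFconst _ 1)) => y; rewrite big_nil.
by apply: (PFext (PFmul (polyfun_eval_term r rt) Pts)) => y; rewrite big_cons.
Qed.

Definition conj_eq0 (I : eqType) (s : seq I) (t : I -> term) : formula :=
  foldr (fun i f => GRing.And (t i == 0)%T f) GRing.True s.

Lemma holds_conj_eq0 (I : eqType) (s : seq I) t e :
  GRing.holds e (conj_eq0 s t) <-> forall i, i \in s -> GRing.eval e (t i) = 0.
Proof.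
elim: s => [|i s IH] /=; first by split.
split => [[ti0 /IH ts0] j|ts0]; first by rewrite inE => /orP[/eqP->|/ts0].
by split; [apply: ts0; exact: mem_head|apply/IH => j sj; apply: ts0; rewrite inE sj orbT].
Qed.

Lemma rformula_conj_eq0 (I : eqType) (s : seq I) t :
  (forall i, GRing.rterm (t i)) -> GRing.rformula (conj_eq0 s t).
Proof. by move=> rt; elim: s => //= i s ->; rewrite rt. Qed.

Fixpoint exists_vars (vs : seq nat) (f : formula) : formula :=
  if vs is v :: vs' then GRing.Exists v (exists_vars vs' f) else f.

Lemma rformula_exists_vars vs f : GRing.rformula (exists_vars vs f) = GRing.rformula f.
Proof. by elim: vs. Qed.

Lemma holds_exists_vars n r (e : seq k) f : size e = r ->
  GRing.holds e (exists_vars (iota r n) f) <->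
  exists2 xs : seq k, size xs = n & GRing.holds (e ++ xs) f.
Proof.
move=> <-; elim: n e => [|n IH] e /=.
  split => [fe|[[|//] _]]; last by rewrite cats0.
  by exists [::]; rewrite ?cats0.
have set_nth_rcons x : set_nth 0 e (size e) x = rcons e x.
  by elim: (e) => //= a e' ->.
split => [[x]|[[|x xs] //= [sxs] fexs]].
  rewrite set_nth_rcons -(size_rcons e x) => /IH [xs sxs fexs].
  by exists (x :: xs); [rewrite /= sxs|rewrite -cat_rcons].
exists x; rewrite set_nth_rcons -(size_rcons e x); apply/IH.
by exists xs => //; rewrite cat_rcons.
Qed.

Definition clause_holds (e : seq k) (bc : seq term * seq term) :=
  all (fun t => GRing.eval e t == 0) bc.1 && all (fun t => GRing.eval e t != 0) bc.2.

Lemma qf_eval_dnf_to_form e bcs :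
  GRing.qf_eval e (GRing.dnf_to_form bcs) = has (clause_holds e) bcs.
Proof.
elim: bcs => //= [[ps qs]] bcs <-; congr orb; rewrite /clause_holds /=.
by congr andb; [elim: ps|elim: qs] => //= t ts ->.
Qed.

End Formulas.

Definition map_image (k : fieldType) n r (p : 'I_r -> 'rV[k]_n -> k)
  (Y : 'rV[k]_n -> Prop) (y : 'rV[k]_r) := exists2 x, Y x & y = quot_map p x.

(* Chevalley's theorem, by quantifier elimination. *)
Lemma closed_image_dnf (k : closedFieldType) n r (Y : 'rV[k]_n -> Prop)
    (p : 'I_r -> 'rV[k]_n -> k) :
  zclosed Y -> (forall i, polyfun (p i)) ->
  exists2 bcs, all GRing.dnf_rterm bcs & forall y : 'rV[k]_r,
    has (clause_holds (row2seq y)) bcs <-> map_image p Y y.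
Proof.
move=> /zclosed_finite [s [F [Fpoly YF]]] ppoly.
have [tF EF] := polyfun_family_term_rep r Fpoly.
have [tp Ep] := polyfun_family_term_rep r ppoly.
pose phi := exists_vars (iota r n) (GRing.And (conj_eq0 (enum 'I_s) tF)
  (conj_eq0 (enum 'I_r) (fun i => 'X_i - tp i)%T)).
have rphi : GRing.rformula phi.
  rewrite rformula_exists_vars /= !rformula_conj_eq0 // => i /=.
    by have [] := Ep i.
  by have [] := EF i.
have wf := @ClosedFieldQE.wf_ex_elim k.
have ok := @ClosedFieldQE.holds_ex_elim k (@GRing.solve_monicpoly k).
have qf_psi := GRing.quantifier_elim_wf wf rphi.
exists (GRing.qf_to_dnf (GRing.quantifier_elim (@ClosedFieldQE.ex_elim k) phi) false).
  by apply: GRing.qf_to_dnf_rterm; case/andP: qf_psi.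
move=> y; rewrite -qf_eval_dnf_to_form (GRing.qf_to_dnfP _ qf_psi).
have env_y xs (i : 'I_r) : nth 0 (row2seq y ++ xs) i = y ord0 i.
  by rewrite nth_cat size_row2seq ltn_ord nth_row2seq.
have env_x xs (j : nat) : nth 0 (row2seq y ++ xs) (r + j) = nth 0 xs j.
  by rewrite nth_cat size_row2seq ltnNge leq_addr /= addKn.
rewrite -(rwP (GRing.quantifier_elim_rformP wf ok _ rphi)).
rewrite (holds_exists_vars _ _ (size_row2seq y)); split.
  move=> [xs _ [/holds_conj_eq0 F0 /holds_conj_eq0 yp]].
  pose x : 'rV[k]_n := \row_j nth 0 xs j.
  have Ex (j : 'I_n) : nth 0 (row2seq y ++ xs) (r + j) = x ord0 j by rewrite env_x mxE.
  exists x; first by apply/YF => i; rewrite -(term_rep_eval (EF i) Ex); exact/F0/mem_enum.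
  apply/rowP => i; have /eqP := yp i (mem_enum _ i).
  by rewrite /= (term_rep_eval (Ep i) Ex) env_y mxE subr_eq0 => /eqP.
move=> [x /YF F0 yx]; exists (row2seq x); first exact: size_row2seq.
have Ex (j : 'I_n) : nth 0 (row2seq y ++ row2seq x) (r + j) = x ord0 j.
  by rewrite env_x nth_row2seq.
split; apply/holds_conj_eq0 => i _; first by rewrite (term_rep_eval (EF i) Ex).
by rewrite /= (term_rep_eval (Ep i) Ex) env_y yx mxE subrr.
Qed.

Section ConstructibleDichotomy.
Variables (k : fieldType) (r : nat) (T : 'rV[k]_r -> Prop).
Hypothesis T_ne : exists y, T y.
Hypothesis T_irr : forall P Q : 'rV[k]_r -> k, polyfun P -> polyfun Q ->
  (forall y, T y -> P y * Q y = 0) ->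
  (forall y, T y -> P y = 0) \/ (forall y, T y -> Q y = 0).

Definition in_hypersurface (C : 'rV[k]_r -> Prop) := exists P, [/\ polyfun P,
  exists2 y, T y & P y <> 0 & forall y, T y -> C y -> P y = 0].

Definition contains_basic_open (C : 'rV[k]_r -> Prop) := exists q, [/\ polyfun q,
  exists2 y, T y & q y <> 0 & forall y, T y -> q y <> 0 -> C y].

Lemma in_hypersurface_disjoint (C : 'rV[k]_r -> Prop) :
  (forall y, T y -> ~ C y) -> in_hypersurface C.
Proof.
have [y Ty] := T_ne.
by move=> TC; exists (fun _ => 1); split=> [|/=|y' Ty' /(TC _ Ty')//];
  [exact: PFconst|exists y => //; exact/eqP/oner_neq0].
Qed.

Lemma in_hypersurfaceU (C D : 'rV[k]_r -> Prop) : in_hypersurface C ->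
  in_hypersurface D -> in_hypersurface (fun y => C y \/ D y).
Proof.
move=> [P [Ppoly [y1 Ty1 Py1] PC]] [Q [Qpoly [y2 Ty2 Qy2] QD]].
exists (fun y => P y * Q y); split; first exact: PFmul.
  apply: NNPP => PQ0; case: (T_irr Ppoly Qpoly) => [y Ty|P0|Q0].
  - by apply: NNPP => PQy; apply: PQ0; exists y.
  - exact: Py1 (P0 _ Ty1).
  - exact: Qy2 (Q0 _ Ty2).
by move=> y Ty [/(PC _ Ty)->|/(QD _ Ty)->]; rewrite ?mul0r ?mulr0.
Qed.

Lemma in_hypersurface_sub (C D : 'rV[k]_r -> Prop) :
  (forall y, T y -> C y -> D y) -> in_hypersurface D -> in_hypersurface C.
Proof.
by move=> CD [P [Ppoly PT PD]]; exists P; split => // y Ty /(CD _ Ty); exact: PD.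
Qed.

Lemma zero_locus_dichotomy (ps : seq (GRing.term k)) : all (@GRing.rterm k) ps ->
  in_hypersurface (fun y => all (fun t => GRing.eval (row2seq y) t == 0) ps) \/
  forall y, T y -> all (fun t => GRing.eval (row2seq y) t == 0) ps.
Proof.
elim: ps => [|t ps IH /= /andP[rt /IH [psH|ps0]]]; [by right|left|].
  by apply: in_hypersurface_sub psH => y _ /andP[].
case: (classic (exists2 y, T y & GRing.eval (row2seq y) t <> 0)) => [tT|t0].
  left; exists (fun y => GRing.eval (row2seq y) t); split => //.
    exact: polyfun_eval_term.
  by move=> y _ /andP[/eqP].
right => y Ty; rewrite ps0 // andbT; apply/eqP; apply: NNPP => ty.
by apply: t0; exists y.
Qed.

Lemma clause_dichotomy bc : GRing.dnf_rterm bc ->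
  in_hypersurface (fun y => clause_holds (row2seq y) bc) \/
  contains_basic_open (fun y => clause_holds (row2seq y) bc).
Proof.
case: bc => ps qs /andP[/= /zero_locus_dichotomy [psH|ps0] rqs].
  by left; apply: in_hypersurface_sub psH => y _ /andP[].
pose Q (y : 'rV[k]_r) := \prod_(t <- qs) GRing.eval (row2seq y) t.
have Qpoly : polyfun Q by exact: polyfun_prod_eval_term.
have Q0 y : (Q y != 0) = all (fun t => GRing.eval (row2seq y) t != 0) qs.
  by rewrite /Q prodf_seq_neq0.
case: (classic (exists2 y, T y & Q y <> 0)) => [[y Ty Qy]|QT0].
  right; exists Q; split => //; first by exists y.
  by move=> y' Ty' /eqP; rewrite Q0 /clause_holds ps0.
left; apply: in_hypersurface_disjoint => y Ty /andP[_ /=]; rewrite -Q0 => /eqP Qy.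
by apply: QT0; exists y.
Qed.

Lemma dnf_dichotomy bcs : all GRing.dnf_rterm bcs ->
  in_hypersurface (fun y => has (clause_holds (row2seq y)) bcs) \/
  contains_basic_open (fun y => has (clause_holds (row2seq y)) bcs).
Proof.
elim: bcs => [_|bc bcs IH /= /andP[/clause_dichotomy bcD /IH bcsD]].
  by left; apply: in_hypersurface_disjoint.
case: bcsD => [bcsH|[q [qpoly qT qbcs]]]; last first.
  by right; exists q; split => // y Ty /(qbcs _ Ty) ->; rewrite orbT.
case: bcD => [bcH|[q [qpoly qT qbc]]]; last first.
  by right; exists q; split => // y Ty /(qbc _ Ty) ->.
left; have [P [Ppoly PT PC]] := in_hypersurfaceU bcH bcsH.
by exists P; split => // y Ty /orP; exact: PC.
Qed.

End ConstructibleDichotomy.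

Section Geometry.
Variable k : fieldType.

Lemma polyfun_comp n r (P : 'rV[k]_r -> k) (q : 'I_r -> 'rV[k]_n -> k) :
  polyfun P -> (forall i, polyfun (q i)) -> polyfun (fun x => P (quot_map q x)).
Proof.
move=> Ppoly qpoly; elim: Ppoly => [c|i|f g _ Pf _ Pg|f g _ Pf _ Pg|f g _ Pf fg].
- exact: PFconst.
- by apply: (PFext (qpoly i)) => x; rewrite mxE.
- exact: PFadd.
- exact: PFmul.
- by apply: (PFext Pf) => x; rewrite fg.
Qed.

Lemma zclosed_zero n (s : 'rV[k]_n -> k) : polyfun s -> zclosed (fun x => s x = 0).
Proof.
by move=> spoly; exists (eq^~ s); split=> [f ->|x] //; split=> [s0 f ->|]; last exact.
Qed.

Lemma regular_family_polyfun n r (X : 'rV[k]_n -> Prop) (f : 'I_r -> 'rV[k]_n -> k) :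
  (forall i, regular_on X (f i)) -> exists p : 'I_r -> 'rV[k]_n -> k,
    (forall i, polyfun (p i)) /\ forall x, X x -> quot_map f x = quot_map p x.
Proof.
move=> freg; have [p fp] := functional_choice
  (fun i p => polyfun p /\ forall x, X x -> f i x = p x) freg.
exists p; split => [i|x Xx]; first by have [] := fp i.
by apply/rowP => i; rewrite !mxE; have [_ ->] := fp i.
Qed.

Lemma map_image_irreducible n r (X : 'rV[k]_n -> Prop) (p : 'I_r -> 'rV[k]_n -> k) :
  irreducible_variety X -> (forall i, polyfun (p i)) ->
  forall P Q : 'rV[k]_r -> k, polyfun P -> polyfun Q ->
  (forall y, map_image p X y -> P y * Q y = 0) ->
  (forall y, map_image p X y -> P y = 0) \/ (forall y, map_image p X y -> Q y = 0).
Proof.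
move=> [_ _ Xirr] ppoly P Q Ppoly Qpoly PQ0.
have := Xirr _ _ (zclosed_zero (polyfun_comp Ppoly ppoly))
  (zclosed_zero (polyfun_comp Qpoly ppoly)).
case=> [x Xx|P0|Q0]; last 2 first.
- by left => _ [x Xx ->]; exact: P0.
- by right => _ [x Xx ->]; exact: Q0.
have /eqP := PQ0 _ (ex_intro2 _ _ x Xx erefl).
by rewrite mulf_eq0 => /orP[/eqP|/eqP]; [left|right].
Qed.

Lemma invariant_fun_comp m n r (G : 'rV[k]_m -> Prop) (X : 'rV[k]_n -> Prop) act
    (f p : 'I_r -> 'rV[k]_n -> k) (P : 'rV[k]_r -> k) :
  (forall i, invariant_fun G X act (f i)) -> (forall i, polyfun (p i)) ->
  (forall x, X x -> quot_map f x = quot_map p x) -> polyfun P ->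
  invariant_fun G X act (fun x => P (quot_map f x)).
Proof.
move=> finv ppoly fp Ppoly; split.
  exists (fun x => P (quot_map p x)); split=> [|x Xx]; first exact: polyfun_comp.
  by rewrite fp.
by move=> g x Gg Xx; congr P; apply/rowP => i; rewrite !mxE (finv i).2.
Qed.

End Geometry.

Lemma orbit_fibers_saturated (k : fieldType) m n (G : 'rV[k]_m -> Prop) e mul inv
    (X : 'rV[k]_n -> Prop) act r (f : 'I_r -> 'rV[k]_n -> k) (Y : 'rV[k]_n -> Prop) :
  affine_algebraic_group G e mul inv -> regular_action G e mul X act ->
  (forall y, aff_quotient X f y -> exists x0, X x0 /\
     forall x, (X x /\ quot_map f x = y) <-> h_orbit G act x0 x) ->
  (forall g y, G g -> Y y -> Y (act g y)) ->
  forall x x', X x -> X x' -> quot_map f x' = quot_map f x -> Y x' -> Y x.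
Proof.
move=> [_ _ [_ Ginv] [_ [_ invK]] _] [_ act1 actM _] fibers Ystable.
move=> x x' Xx Xx' fxx' Yx'.
have [z [Xz orbit_z]] : exists z, X z /\
    forall x'', (X x'' /\ quot_map f x'' = quot_map f x) <-> h_orbit G act z x''.
  by apply: fibers => P _; apply.
have [g [Gg ->]] := proj1 (orbit_z x) (conj Xx erefl).
have [g' [Gg' x'E]] := proj1 (orbit_z x') (conj Xx' fxx').
have -> : z = act (inv g') x'.
  rewrite x'E -actM //; last exact: Ginv.
  by have [-> _] := invK g' Gg'; rewrite act1.
by apply: (Ystable) => //; apply: (Ystable) => //; exact: Ginv.
Qed.

Theorem theorem6p4 (k : closedFieldType) (m n : nat)
  (G : 'rV[k]_m -> Prop) (e : 'rV[k]_m)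
  (mul : 'rV[k]_m -> 'rV[k]_m -> 'rV[k]_m) (inv : 'rV[k]_m -> 'rV[k]_m)
  (X : 'rV[k]_n -> Prop) (act : 'rV[k]_m -> 'rV[k]_n -> 'rV[k]_n)
  (r : nat) (f : 'I_r -> 'rV[k]_n -> k) :
  affine_algebraic_group G e mul inv ->
  irreducible_variety X ->
  regular_action G e mul X act ->
  generates_invariants G X act f ->
  (forall y, aff_quotient X f y ->
     exists x0, X x0 /\
       forall x, (X x /\ quot_map f x = y) <-> h_orbit G act x0 x) ->
  observable G X act.
Proof.
move=> grp Xirr action [finv _] fibers Y Yclosed YX Ystable [x1 [X1 nY1]].
have [p [ppoly fp]] := regular_family_polyfun (fun i => (finv i).1).
have [bcs rbcs imY] := closed_image_dnf Yclosed ppoly.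
have Tne : exists y, map_image p X y by exists (quot_map p x1), x1.
case: (dnf_dichotomy Tne (map_image_irreducible Xirr ppoly) rbcs).
  move=> [P [Ppoly [_ [x0 X0 ->] Px0] PY]].
  exists (fun x => P (quot_map f x)); split; first exact: invariant_fun_comp.
    by exists x0; rewrite fp.
  move=> y Yy; rewrite fp; last exact: YX.
  by apply: PY; [exists y; first exact: YX|apply/imY; exists y].
move=> [q [qpoly [_ [x0 X0 ->] qx0] qY]]; exfalso; have [_ _ Xsplit] := Xirr.
have := Xsplit Y _ Yclosed (zclosed_zero (polyfun_comp qpoly ppoly)).
case=> [x Xx|XY|Xq]; [|exact: nY1 (XY _ X1)|exact: qx0 (Xq _ X0)].
case: (classic (q (quot_map p x) = 0)) => [|qx]; [by right|left].
have /imY [x' Yx' px'] := qY _ (ex_intro2 _ _ x Xx erefl) qx.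
apply: (orbit_fibers_saturated grp action fibers Ystable Xx (YX _ Yx')) => //.
by rewrite (fp _ Xx) (fp _ (YX _ Yx')).
Qed.
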